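(* Consider an interface between two cells $i$ and $j$ in a two-point flux finite-volume discretization of incompressible, immiscible multiphase flow with phases $\ell \in \{1,\dots,n_p\}$. Let $T>0$ be the interface transmissibility, and for each phase $\ell$ let $\lambda_{\ell,i}\ge 0$ and $\lambda_{\ell,j}\ge 0$ be the (fixed) phase mobilities in cells $i$ and $j$, $g_\ell$ a fixed phase gravity potential difference across the interface, and $D_\ell>0$ a fixed normalization constant. Treat the phase pressure differences $\Delta p_1,\dots,\Delta p_{n_p}$ across the interface as variables, and set $\Delta\Phi_\ell = \Delta p_\ell - g_\ell$. For a scaling coefficient $\gamma_\ell\in\mathbb{R}$ define $$\beta_\ell = \frac12 + \frac{1}{\pi}\arctan\!\Big(\gamma_\ell\,\frac{\Delta\Phi_\ell}{D_\ell}\Big),\qquad \lambda_\ell^{WA} = \beta_\ell\,\lambda_{\ell,i} + (1-\beta_\ell)\,\lambda_{\ell,j},$$ and the total velocity $$u_t = T\sum_{m=1}^{n_p} \lambda_m^{WA}\,\Delta\Phi_m .$$ If $\gamma_\ell \ge 0$, then $\dfrac{\partial u_t}{\partial \Delta p_\ell} \ge 0$.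
   Context: This is the weighted-averaging (WA) treatment of flow mobilities in a total velocity formulation. In the paper, $D_\ell = |g_{ij,ref}| + |c_{\ell,ref}|$ where $g_{ij,ref}=\max_\ell(\rho_{\ell,s})\, g\,\Delta z_{ij}$ is a reference gravity potential difference (with surface phase densities $\rho_{\ell,s}$) and $c_{\ell,ref}=p_{\ell,cap}(0.8)-p_{\ell,cap}(0.2)$ a reference capillary pressure difference; both are constants, assumed here to have positive sum. Differences are taken as $\Delta\bullet = \bullet_i - \bullet_j$. The mobilities are held fixed (they depend on saturations, not on pressures). *)

From Stdlib Require Import Reals Lra.
From Coquelicot Require Import Coquelicot.
Open Scope R_scope.

(* finite sum over m = 0, ..., n-1 (phases indexed 0..np-1) *)
Fixpoint sum_lt (n : nat) (f : nat -> R) : R :=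
  match n with
  | O => 0
  | S k => sum_lt k f + f k
  end.

Definition upd (dp : nat -> R) (l : nat) (x : R) : nat -> R :=
  fun m => if Nat.eqb m l then x else dp m.

Definition beta (gam D dPhi : R) : R :=
  / 2 + / PI * atan (gam * dPhi / D).

Definition lamWA (gam D dPhi lam_i lam_j : R) : R :=
  beta gam D dPhi * lam_i + (1 - beta gam D dPhi) * lam_j.

Definition u_t (np : nat) (T : R) (lam_i lam_j g D gam : nat -> R)
  (dp : nat -> R) : R :=
  T * sum_lt np (fun m =>
        lamWA (gam m) (D m) (dp m - g m) (lam_i m) (lam_j m) * (dp m - g m)).

(* Only the l-th summand of u_t depends on Δp_l, and the derivative of
   λ^WA(ΔΦ) ΔΦ with respect to ΔΦ is again a weighted average of the two
   mobilities, with weight ω(t) = 1/2 + (atan t + t/(1+t²))/π at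
   t = γ ΔΦ / D.  Writing a = atan t one has t/(1+t²) = sin(2a)/2, and
   sin x < x for x > 0 applied at x = 2a + π and x = π - 2a shows
   |a + sin(2a)/2| <= π/2, i.e. 0 <= ω(t) <= 1.  Hence the derivative is
   nonnegative for every sign of γ. *)
From Stdlib Require Import Reals Lra Lia.
From Coquelicot Require Import Coquelicot.
Open Scope R_scope.

Lemma is_derive_sum_lt (n : nat) (f : nat -> R -> R) (df : nat -> R) (x : R) :
  (forall m, (m < n)%nat -> is_derive (f m) x (df m)) ->
  is_derive (fun y => sum_lt n (fun m => f m y)) x (sum_lt n df).
Proof.
  induction n as [|n IH]; intros Hf; cbn [sum_lt].
  - exact (is_derive_const 0 x).
  - apply (is_derive_plus (fun y => sum_lt n (fun m => f m y)) (f n)).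
    + apply IH; intros m Hm; apply Hf; lia.
    + apply Hf; lia.
Qed.

Lemma sum_lt_indicator (n l : nat) (c : R) :
  sum_lt n (fun m => if Nat.eqb m l then c else 0) = if Nat.ltb l n then c else 0.
Proof.
  induction n as [|n IH]; cbn [sum_lt]; [reflexivity|].
  rewrite IH.
  destruct (Nat.eqb_spec n l), (Nat.ltb_spec l n), (Nat.ltb_spec l (S n));
    try lia; ring.
Qed.

Definition upwind_weight (t : R) : R := / 2 + / PI * (atan t + t / (1 + t²)).

Lemma is_derive_phase_flux (gam D g lam_i lam_j p : R) : D <> 0 ->
  is_derive (fun x => lamWA gam D (x - g) lam_i lam_j * (x - g)) p
    (upwind_weight (gam * (p - g) / D) * lam_i
     + (1 - upwind_weight (gam * (p - g) / D)) * lam_j).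
Proof.
  intros HD. unfold lamWA, beta, upwind_weight.
  auto_derive; [trivial|].
  change (gam * (p + - g) * / D) with (gam * (p - g) / D).
  assert (HDq : D * D + gam * (p - g) * (gam * (p - g)) <> 0).
  { pose proof (Rsqr_pos_lt D HD). pose proof (Rle_0_sqr (gam * (p - g))).
    unfold Rsqr in *. lra. }
  unfold Rsqr. field. repeat split; [exact HD | exact HDq | exact PI_neq0].
Qed.

Lemma div_one_add_sqr_eq_sin_double_atan (t : R) :
  t / (1 + t²) = sin (2 * atan t) / 2.
Proof.
  rewrite sin_2a, sin_atan, cos_atan.
  assert (Hpos : 0 < 1 + t²) by (pose proof (Rle_0_sqr t); lra).
  assert (Hsq : sqrt (1 + t²) * sqrt (1 + t²) = 1 + t²) by (apply sqrt_sqrt; lra).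
  assert (Hnz : sqrt (1 + t²) <> 0) by (apply Rgt_not_eq, sqrt_lt_R0; exact Hpos).
  set (s := sqrt (1 + t²)) in *.
  rewrite <- Hsq. field. exact Hnz.
Qed.

Lemma atan_add_div_one_add_sqr_bound (t : R) :
  - (PI / 2) <= atan t + t / (1 + t²) <= PI / 2.
Proof.
  rewrite div_one_add_sqr_eq_sin_double_atan.
  destruct (atan_bound t) as [Hlo Hhi].
  set (a := atan t) in *.
  split.
  - assert (Hsin : sin (2 * a) = - sin (2 * a + PI)) by (rewrite neg_sin; ring).
    assert (Hlt : sin (2 * a + PI) < 2 * a + PI) by (apply sin_lt_x; lra).
    lra.
  - assert (Hsin : sin (2 * a) = sin (PI - 2 * a)) by (rewrite sin_PI_x; reflexivity).
    assert (Hlt : sin (PI - 2 * a) < PI - 2 * a) by (apply sin_lt_x; lra).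
    lra.
Qed.

Lemma upwind_weight_bound (t : R) : 0 <= upwind_weight t <= 1.
Proof.
  destruct (atan_add_div_one_add_sqr_bound t) as [Hlo Hhi].
  assert (HPI : 0 < / PI) by (apply Rinv_0_lt_compat, PI_RGT_0).
  unfold upwind_weight. set (s := atan t + t / (1 + t²)) in *.
  assert (Hup : 0 <= / PI * (PI / 2 + s)) by (apply Rmult_le_pos; lra).
  assert (Hdown : 0 <= / PI * (PI / 2 - s)) by (apply Rmult_le_pos; lra).
  replace (/ PI * (PI / 2 + s)) with (/ 2 + / PI * s) in Hup by (field; exact PI_neq0).
  replace (/ PI * (PI / 2 - s)) with (1 - (/ 2 + / PI * s)) in Hdown by (field; exact PI_neq0).
  lra.
Qed.

Theorem mainTheorem1 (np : nat) (T : R) (lam_i lam_j g D gam : nat -> R)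
  (dp : nat -> R) (l : nat)
  (HT : 0 < T)
  (Hli : forall m, (m < np)%nat -> 0 <= lam_i m)
  (Hlj : forall m, (m < np)%nat -> 0 <= lam_j m)
  (HD : forall m, (m < np)%nat -> 0 < D m)
  (Hl : (l < np)%nat)
  (Hgam : 0 <= gam l) :
  ex_derive (fun x => u_t np T lam_i lam_j g D gam (upd dp l x)) (dp l) /\
  0 <= Derive (fun x => u_t np T lam_i lam_j g D gam (upd dp l x)) (dp l).
Proof.
  set (w := upwind_weight (gam l * (dp l - g l) / D l)).
  set (d := w * lam_i l + (1 - w) * lam_j l).
  assert (Hterm : forall m, (m < np)%nat ->
    is_derive (fun x => lamWA (gam m) (D m) (upd dp l x m - g m) (lam_i m) (lam_j m)
                         * (upd dp l x m - g m))
      (dp l) (if Nat.eqb m l then d else 0)).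
  { intros m _. unfold upd. destruct (Nat.eqb_spec m l) as [-> | _].
    - apply is_derive_phase_flux, Rgt_not_eq, HD, Hl.
    - exact (is_derive_const _ (dp l)). }
  pose proof (is_derive_sum_lt _ _ _ _ Hterm) as Hsum.
  rewrite sum_lt_indicator, (proj2 (Nat.ltb_lt l np) Hl) in Hsum.
  assert (Hu : is_derive (fun x => u_t np T lam_i lam_j g D gam (upd dp l x)) (dp l) (T * d))
    by exact (is_derive_scal _ _ T _ Hsum).
  split; [exists (T * d); exact Hu |].
  replace (Derive _ (dp l)) with (T * d) by (symmetry; exact (is_derive_unique _ _ _ Hu)).
  assert (Hw : 0 <= w <= 1) by apply upwind_weight_bound.
  pose proof (Hli l Hl). pose proof (Hlj l Hl).
  apply Rmult_le_pos; [lra |].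
  unfold d. apply Rplus_le_le_0_compat; apply Rmult_le_pos; lra.
Qed.
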